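(* Let $d,g\ge 1$ be integers, $n=dg$, and let $\pi$ be a permutation of $\{0,\dots,n-1\}$ such that $\pi(i)\neq i$ for all $i$. Then any routing of $\pi$ on the network $\mathrm{POPS}(d,g)$ uses at least $\lceil d/g\rceil$ slots.
   Context: The network $\mathrm{POPS}(d,g)$ has $n=dg$ processors indexed $0,\dots,n-1$; processor $i$ belongs to group $\mathrm{group}(i):=\lfloor i/d\rfloor\in\{0,\dots,g-1\}$. For each pair of groups $a,b$ there is a coupler $c(b,a)$ whose sources are the processors of group $a$ and whose destinations are the processors of group $b$ ($g^2$ couplers in total). Processor $i$ can transmit to the couplers $c(a,\mathrm{group}(i))$, $a=0,\dots,g-1$, and receive from the couplers $c(\mathrm{group}(i),b)$, $b=0,\dots,g-1$. In one slot each processor, in parallel, performs local computation, sends one packet to any subset of its transmitters, and receives a packet from one of its receivers; no two processors may send to the same coupler in the same slot. Processors may store packets between slots. Routing a permutation $\pi$ means: initially processor $i$ holds packet $p_i$ with destination $\pi(i)$, and at the end each $p_i$ must be at processor $\pi(i)$. *)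

From mathcomp Require Import all_boot all_fingroup.
Set Implicit Arguments. Unset Strict Implicit. Unset Printing Implicit Defensive.

(* Processors are 'I_(d*g); packets are identified by their source index
   (packet p_i is named i). group i = i / d (a nat, < g when d > 0);
   groups used as coupler indices have type 'I_g. *)
Definition group (d : nat) (i : nat) : nat := i %/ d.

(* One slot: processor i optionally sends one packet p to the set A of its
   transmitters (transmitter a means coupler c(a, group i)), and optionally
   listens to one receiver b (coupler c(group i, b)). *)
Record slot (d g : nat) := Slot {
  send : 'I_(d * g) -> option ('I_(d * g) * {set 'I_g});
  recv : 'I_(d * g) -> option 'I_g }.

Definition state (d g : nat) := 'I_(d * g) -> {set 'I_(d * g)}.

(* a slot is legal in state S: a processor only sends a packet it holds, and
   no two distinct processors send to the same coupler c(a, b)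
   (two processors share a transmitter coupler iff same group and same a) *)
Definition slot_ok (d g : nat) (S : state d g) (s : slot d g) : Prop :=
  (forall i p A, send s i = Some (p, A) -> p \in S i) /\
  (forall i j p q A B (a : 'I_g), i != j ->
     send s i = Some (p, A) -> send s j = Some (q, B) ->
     group d i = group d j -> a \in A -> a \in B -> False).

(* packets received by processor j: the packet sent on coupler
   c(group j, b) where b is j's chosen receiver *)
Definition received (d g : nat) (s : slot d g) (j : 'I_(d * g)) :
  {set 'I_(d * g)} :=
  [set p | [exists i : 'I_(d * g),
     match send s i, recv s j with
     | Some (q, A), Some b =>
         [&& q == p, group d i == val b & [exists a in A, val a == group d j]]
     | _, _ => false
     end]].

Definition step (d g : nat) (S : state d g) (s : slot d g) : state d g :=
  fun j => S j :|: received s j.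

Fixpoint run_ok (d g : nat) (S : state d g) (ss : seq (slot d g)) : Prop :=
  match ss with
  | [::] => True
  | s :: r => slot_ok S s /\ run_ok (step S s) r
  end.

Definition final (d g : nat) (S : state d g) (ss : seq (slot d g)) : state d g :=
  foldl (@step d g) S ss.

Definition init (d g : nat) : state d g := fun i => [set i].

Definition routes (d g : nat) (pi : {perm 'I_(d * g)}) (ss : seq (slot d g)) :
  Prop :=
  run_ok (@init d g) ss /\ forall i, i \in final (@init d g) ss (pi i).

Definition ceil_div (a b : nat) : nat := (a + b.-1) %/ b.

From mathcomp Require Import all_boot all_fingroup.
From mathcomp Require Import zify.
(* Imported last so that [group] is not shadowed by fingroup's. *)

Set Implicit Arguments. Unset Strict Implicit. Unset Printing Implicit Defensive.

(* Since no packet starts at its destination, every packet must be received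
   at least once.  In a legal slot each of the g^2 couplers carries at most
   one packet, so at most g^2 distinct packets are received per slot.  Hence
   d g <= g^2 * #slots, i.e. #slots >= d / g. *)

Lemma ceil_div_le (a b m : nat) : 0 < b -> a <= m * b -> ceil_div a b <= m.
Proof. by move=> b_gt0 le_a_mb; rewrite /ceil_div -ltnS ltn_divLR // mulSn; lia. Qed.

Section Routing.
Variables d g : nat.

Definition delivered (s : slot d g) : {set 'I_(d * g)} :=
  \bigcup_(j : 'I_(d * g)) received s j.

(* [coupler_packet s (b, a)] is the packet that slot [s] puts on the coupler
   c(a, b), i.e. the one sent by some processor of group b on transmitter a. *)
Definition coupler_packet (s : slot d g) (ba : 'I_g * 'I_g) : option 'I_(d * g) :=
  if [pick i | if send s i is Some (_, A) then (group d i == ba.1) && (ba.2 \in A)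
               else false] is Some i
  then omap fst (send s i) else None.

Lemma delivered_coupler_packet (S : state d g) (s : slot d g) p :
  slot_ok S s -> p \in delivered s ->
  exists ba, coupler_packet s ba = Some p.
Proof.
case=> _ no_collision /bigcupP [j _]; rewrite inE => /existsP [i].
case send_i: (send s i) => [[q A]|] //; case: (recv s j) => [b|] //.
case/and3P => /eqP <- /eqP group_i /existsP [a /andP [aA _]].
exists (b, a); rewrite /coupler_packet; case: pickP => [i' | /(_ i)]; last first.
  by rewrite send_i group_i eqxx aA.
case send_i': (send s i') => [[q' A'] |] // /andP [/eqP group_i' aA'].
(* The picked sender i' uses the same coupler as i, so it is i. *)
have [eq_i'i | neq_i'i] := eqVneq i' i.
  by move: send_i'; rewrite eq_i'i send_i => -[<-].
by case: (no_collision _ _ _ _ _ _ a neq_i'i send_i' send_i); rewrite ?group_i ?group_i'.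
Qed.

Lemma card_delivered (S : state d g) (s : slot d g) :
  slot_ok S s -> #|delivered s| <= g * g.
Proof.
move=> ok_s; rewrite -(card_imset _ (@Some_inj _)).
have sub : [set Some p | p in delivered s] \subset
           [set coupler_packet s ba | ba in [set: 'I_g * 'I_g]].
  apply/subsetP => _ /imsetP [p /(delivered_coupler_packet ok_s) [ba <-] ->].
  by rewrite imset_f ?inE.
apply: leq_trans (subset_leq_card sub) _.
by apply: leq_trans (leq_imset_card _ _) _; rewrite cardsT card_prod !card_ord.
Qed.

Lemma card_delivered_run (S : state d g) (ss : seq (slot d g)) :
  run_ok S ss -> #|\bigcup_(s <- ss) delivered s| <= size ss * (g * g).
Proof.
elim: ss S => [|s ss IH] S /=; first by rewrite big_nil cards0.
case=> ok_s ok_ss; rewrite big_cons mulSn.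
by apply: leq_trans (leq_card_setU _ _) _; rewrite leq_add ?(card_delivered ok_s) ?(IH _ ok_ss).
Qed.

Lemma final_subset (S : state d g) (ss : seq (slot d g)) j :
  final S ss j \subset S j :|: \bigcup_(s <- ss) delivered s.
Proof.
elim: ss S => [|s ss IH] S /=; first by rewrite big_nil setU0.
apply: subset_trans (IH _) _; rewrite big_cons /step setUA.
by apply/setSU/setUS; rewrite (bigcup_max j).
Qed.

End Routing.

Theorem proposition1 (d g : nat) (hd : 0 < d) (hg : 0 < g)
    (pi : {perm 'I_(d * g)}) (hpi : forall i, pi i != i)
    (ss : seq (slot d g)) (hr : routes pi ss) :
  ceil_div d g <= size ss.
Proof.
case: hr => ok_ss at_dest.
have all_delivered : \bigcup_(s <- ss) delivered s = [set: 'I_(d * g)].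
  apply/setP => i; rewrite inE.
  have /setUP [|//] := subsetP (final_subset (@init d g) ss (pi i)) i (at_dest i).
  by rewrite inE eq_sym (negbTE (hpi i)).
have := card_delivered_run ok_ss; rewrite all_delivered cardsT card_ord mulnA.
by rewrite leq_pmul2r // => /ceil_div_le; apply.
Qed.
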